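(* Let $\mathbf{u}$ be the utility profile of the truth-biased voters, let $\mathbf{a}$ be their truthful ballot vector, and let $\mathbf{a}^P$ be the ballot vector of the principled voters. Let $j=\min\{r\mid c_r\in W(\mathbf{a}+\mathbf{a}^P)\}$. Then $\mathbf{a}$ is a PNE of $(\mathcal{T},R^L,\mathbf{u},\mathbf{a}^P)$ if and only if neither of the following conditions holds: (1) $|W(\mathbf{a}+\mathbf{a}^P)|>1$, and there exist a candidate $c_k\in W(\mathbf{a}+\mathbf{a}^P)$ and a voter $i\in N$ such that $a_i\neq c_k$ and $c_k\succ_i c_j$; (2) $H(\mathbf{a}+\mathbf{a}^P)\neq\emptyset$, and there exist a candidate $c_k\in H(\mathbf{a}+\mathbf{a}^P)$ and a voter $i\in N$ such that $a_i\neq c_k$, $c_k\succ_i c_j$, and $k<j$.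
   Context: Let $C=\{c_1,\dots,c_m\}$ be candidates. There is a set $N=\{1,\dots,n\}$ of truth-biased voters, each with an injective utility function $u_i:C\to\mathbb{N}$ inducing $c\succ_i c'$ iff $u_i(c)>u_i(c')$; $a_i$ is $i$'s top candidate and $\mathbf{a}=(a_1,\dots,a_n)$. There is also a set $P=\{n+1,\dots,n+s\}$ of principled voters, who are not players and always vote for their top candidate; their ballot vector is $\mathbf{a}^P\in C^s$. A ballot vector of the truth-biased voters is $\mathbf{b}=(b_1,\dots,b_n)$, $b_i\in C\cup\{\bot\}$; $\mathbf{b}+\mathbf{a}^P$ is the combined ballot vector. For a ballot vector $\mathbf{x}$, $\mathrm{sc}(c,\mathbf{x})$ is the number of ballots for $c$, $M(\mathbf{x})=\max_c\mathrm{sc}(c,\mathbf{x})$, $W(\mathbf{x})=\{c:\mathrm{sc}(c,\mathbf{x})=M(\mathbf{x})\}$, $H(\mathbf{x})=\{c:\mathrm{sc}(c,\mathbf{x})=M(\mathbf{x})-1\}$. Under lexicographic tie-breaking $R^L$ the winner of $\mathbf{b}+\mathbf{a}^P$ is the $c_r\in W(\mathbf{b}+\mathbf{a}^P)$ with smallest index $r$. Fix $0<\varepsilon<\min\{1/m,1/n\}$. If $c$ is the winner, truth-biased voter $i$'s utility is $u_i(c)$ if $b_i\in C\setminus\{a_i\}$, $u_i(c)+\varepsilon$ if $b_i=a_i$, and $-\infty$ if $b_i=\bot$. The game $(\mathcal{T},R^L,\mathbf{u},\mathbf{a}^P)$ has players $N$ with action sets $C\cup\{\bot\}$; a PNE is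 a ballot vector $\mathbf{b}$ from which no voter in $N$ can strictly increase her utility by unilaterally changing her ballot. *)

From mathcomp Require Import all_boot all_order all_algebra.
Set Implicit Arguments. Unset Strict Implicit. Unset Printing Implicit Defensive.
Import Order.TTheory GRing.Theory Num.Theory.

(* Conventions: candidates c_1..c_M are 'I_M (index r-1 for c_r), with
   M = m.+1 >= 1 candidates; truth-biased voters are 'I_n; principled voters 'I_s.
   A ballot of a truth-biased voter is an [option 'I_M]: [None] is the
   abstention ballot (bottom). *)

Section Game.
Variables (M n s : nat).
Notation cand := 'I_M.+1.

Definition top (u : 'I_n -> cand -> nat) (i : 'I_n) : cand :=
  [arg max_(c > ord0) u i c].

Definition truthful (u : 'I_n -> cand -> nat) : 'I_n -> option cand :=
  fun i => Some (top u i).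

Definition score (b : 'I_n -> option cand) (aP : 'I_s -> cand) (c : cand) : nat :=
  #|[set i | b i == Some c]| + #|[set p | aP p == c]|.

Definition maxscore b aP : nat := \max_(c : cand) score b aP c.

Definition Wset b aP : {set cand} := [set c | score b aP c == maxscore b aP].

Definition Hset b aP : {set cand} :=
  [set c | (0 < maxscore b aP)%N && (score b aP c == (maxscore b aP).-1)].

Definition winner b aP : cand := [arg min_(c < ord0 in Wset b aP) (val c)].

(* utilities are extended rationals: None = -infinity *)
Definition util (eps : rat) (u : 'I_n -> cand -> nat) (b : 'I_n -> option cand)
    (aP : 'I_s -> cand) (i : 'I_n) : option rat :=
  match b i with
  | None => None
  | Some x => Some (((u i (winner b aP))%:R + (if x == top u i then eps else 0))%R)
  end.

Definition ext_lt (x y : option rat) : bool :=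
  match x, y with
  | None, Some _ => true
  | Some a, Some b => (a < b)%R
  | _, _ => false
  end.

Definition deviate (b : 'I_n -> option cand) (i : 'I_n) (x : option cand) :
    'I_n -> option cand := fun k => if k == i then x else b k.

Definition is_PNE eps u aP (b : 'I_n -> option cand) : Prop :=
  forall (i : 'I_n) (x : option cand),
    ~ ext_lt (util eps u b aP i) (util eps u (deviate b i x) aP i).

End Game.

From mathcomp Require Import all_boot all_order all_algebra.
From mathcomp Require Import zify lra.
Import Order.TTheory GRing.Theory Num.Theory.

(* A unilateral deviation of voter i from t to c moves one point from t to c.
   If i's favourite t is not the current winner j, the only candidate that can
   take over is c, and it does so exactly when c was tied with j, or was one
   point behind j and beats j in the tie-breaking order.  Voter i gains from
   such a deviation iff she strictly prefers the new winner to j: the bonus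
   eps < 1 for voting truthfully cannot compensate a loss of at least one unit
   of utility, and abstaining is worst of all. *)

Set Implicit Arguments. Unset Strict Implicit.

Lemma eq_arg_min_default (I : finType) (i0 i1 : I) (P : pred I) (F : I -> nat) :
  P i1 -> arg_min i0 P F = arg_min i1 P F.
Proof.
move=> Pi1; rewrite /arg_min /extremum; case: pickP => [//|no_min]; exfalso.
case: (arg_minnP F Pi1) => x Px min_x.
have /negP := no_min x; apply; rewrite /= Px /=.
by apply/forall_inP => z Pz; apply: min_x.
Qed.

Section Scores.
Variables (m n s : nat).
Implicit Types (b : 'I_n -> option 'I_m.+1) (aP : 'I_s -> 'I_m.+1).

Lemma winner_spec b aP :
  (forall d, score b aP d <= score b aP (winner b aP)) /\
  (forall d, score b aP d = score b aP (winner b aP) -> winner b aP <= d).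
Proof.
have [c0 max_c0] := @bigop.eq_bigmax _ (score b aP) (ltac:(by rewrite card_ord)).
have in_max d : (d \in Wset b aP) = (score b aP d == score b aP c0).
  by rewrite inE /maxscore max_c0.
have W_c0 : c0 \in Wset b aP by rewrite in_max.
rewrite /winner (eq_arg_min_default _ _ W_c0).
case: arg_minnP => // w Ww min_w.
have sw : score b aP w = score b aP c0 by apply/eqP; rewrite -in_max.
split=> [d|d sd]; first by rewrite sw -max_c0 leq_bigmax.
by apply: min_w; have : d \in Wset b aP by rewrite in_max sd sw.
Qed.

Lemma winner_max b aP d : score b aP d <= score b aP (winner b aP).
Proof. by case: (winner_spec b aP). Qed.

Lemma winner_min b aP d :
  score b aP d = score b aP (winner b aP) -> winner b aP <= d.
Proof. by case: (winner_spec b aP) => _; apply. Qed.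

Lemma winnerE b aP w :
  (forall d, score b aP d <= score b aP w) ->
  (forall d, score b aP d = score b aP w -> w <= d) -> winner b aP = w.
Proof.
move=> max_w min_w.
have sw : score b aP (winner b aP) = score b aP w.
  by apply/eqP; rewrite eqn_leq max_w winner_max.
by apply: val_inj; apply/eqP; rewrite eqn_leq winner_min ?min_w.
Qed.

Lemma maxscoreE b aP : maxscore b aP = score b aP (winner b aP).
Proof.
apply/eqP; rewrite eqn_leq leq_bigmax andbT.
by apply/bigmax_leqP => d _; apply: winner_max.
Qed.

Lemma in_Wset b aP c :
  (c \in Wset b aP) = (score b aP c == score b aP (winner b aP)).
Proof. by rewrite inE maxscoreE. Qed.

Lemma in_Hset b aP c :
  (c \in Hset b aP) = ((score b aP c).+1 == score b aP (winner b aP)).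
Proof. by rewrite inE maxscoreE; case: (score b aP (winner b aP)). Qed.

Lemma score_deviate b aP i x d :
  score (deviate b i x) aP d + (b i == Some d) = score b aP d + (x == Some d).
Proof.
rewrite /score (cardsD1 i [set k | deviate b i x k == Some d]).
rewrite (cardsD1 i [set k | b k == Some d]).
have -> : [set k | deviate b i x k == Some d] :\ i = [set k | b k == Some d] :\ i.
  by apply/setP => k; rewrite !inE /deviate; case: eqP.
by rewrite !inE /deviate eqxx; lia.
Qed.

Section Deviation.
Variables (b : 'I_n -> option 'I_m.+1) (aP : 'I_s -> 'I_m.+1).
Variables (i : 'I_n) (t c : 'I_m.+1).
Hypothesis bi : b i = Some t.

Let b' := deviate b i (Some c).

Lemma score_deviate_to d :
  score b' aP d + (t == d) = score b aP d + (c == d).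
Proof. by have := score_deviate b aP i (Some c) d; rewrite bi. Qed.

Lemma winner_deviate_tied :
  t != c -> score b aP c = score b aP (winner b aP) -> winner b' aP = c.
Proof.
move=> tc tied; have sc := score_deviate_to c; rewrite eqxx (negbTE tc) in sc.
apply: winnerE => d; have sd := score_deviate_to d; have := winner_max b aP d;
  case: (eqVneq c d) sd => [<- //|_]; case: (t == d) => /=; lia.
Qed.

Lemma winner_deviate_runnerup :
  t != c -> (score b aP c).+1 = score b aP (winner b aP) -> c < winner b aP ->
  winner b' aP = c.
Proof.
move=> tc behind cj; have sc := score_deviate_to c.
rewrite eqxx (negbTE tc) in sc.
apply: winnerE => d; have sd := score_deviate_to d; have := winner_max b aP d;
  have := @winner_min b aP d;
  case: (eqVneq c d) sd => [<- //|_]; case: (t == d) => /=; lia.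
Qed.

Lemma winner_deviate_cases :
  t != winner b aP ->
  winner b' aP = winner b aP \/
  [/\ winner b' aP = c, t != c &
      score b aP c = score b aP (winner b aP) \/
      (score b aP c).+1 = score b aP (winner b aP) /\ c < winner b aP].
Proof.
set j := winner b aP; set w := winner b' aP; move=> tj.
have sj : score b' aP j = score b aP j + (c == j).
  by have := score_deviate_to j; rewrite (negbTE tj) addn0.
have sw := score_deviate_to w.
have max'_j : score b' aP j <= score b' aP w := winner_max b' aP j.
have min'_j : score b' aP j = score b' aP w -> w <= j := @winner_min b' aP j.
have max_w : score b aP w <= score b aP j := winner_max b aP w.
have min_w : score b aP w = score b aP j -> j <= w := @winner_min b aP w.
have eq_ord (x y : 'I_m.+1) : x <= y -> y <= x -> x = y.
  by move=> xy yx; apply/val_inj/eqP; rewrite eqn_leq xy.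
case: (eqVneq w j) => [|wj]; [by left | right].
have wc : w = c.
  apply/eqP; apply: contraNT wj => cw; rewrite [c == w]eq_sym (negbTE cw) in sw.
  apply/eqP/eq_ord; [apply: min'_j | apply: min_w];
    by case: (t == w) sw; case: (c == j) sj => /= sj sw; lia.
rewrite wc in sw max'_j min'_j max_w min_w wj *.
have tc : t != c.
  apply: contra_neq wj => tc; rewrite tc eqxx in sw.
  by apply: eq_ord; [apply: min'_j | apply: min_w]; lia.
split=> //; rewrite (negbTE tc) eqxx addn0 in sw; rewrite (negbTE wj) addn0 in sj.
have [tied|untied] := eqVneq (score b aP c) (score b aP j); [by left | right].
split; first lia.
by rewrite ltn_neqAle wj min'_j //; lia.
Qed.

End Deviation.
End Scores.

Lemma top_max (m n : nat) (u : 'I_n -> 'I_m.+1 -> nat) i c : u i c <= u i (top u i).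
Proof. by rewrite /top; case: arg_maxnP => // t _; apply. Qed.

Lemma truthful_abstention_worse (m n s : nat) eps u (aP : 'I_s -> 'I_m.+1)
    (i : 'I_n) :
  ~ ext_lt (util eps u (truthful u) aP i)
           (util eps u (deviate (truthful u) i None) aP i).
Proof. by rewrite /util /deviate eqxx. Qed.

Lemma truthful_deviation_better (m n s : nat) (eps : rat) u (aP : 'I_s -> 'I_m.+1)
    (i : 'I_n) c :
  (0 < eps < 1)%R ->
  ext_lt (util eps u (truthful u) aP i)
         (util eps u (deviate (truthful u) i (Some c)) aP i) =
  (u i (winner (truthful u) aP) < u i (winner (deviate (truthful u) i (Some c)) aP)).
Proof.
move=> /andP[eps_gt0 eps_lt1]; rewrite /util.
move: (u i (winner (deviate _ i (Some c)) aP)) (u i (winner _ aP)) => y x.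
rewrite /deviate /= !eqxx.
have bonus_ge0 : (0 <= if c == top u i then eps else 0 :> rat)%R.
  by case: ifP => // _; exact: ltW.
have bonus_le : ((if c == top u i then eps else 0) <= eps :> rat)%R.
  by case: ifP => // _; exact: ltW.
move: (if _ then _ else _) bonus_ge0 bonus_le => e e_ge0 e_le.
case: ltnP => [xy|yx]; apply/idP.
- have : (x%:R + 1 <= y%:R :> rat)%R by rewrite natr1 ler_nat.
  lra.
- have : (y%:R <= x%:R :> rat)%R by rewrite ler_nat.
  by move=> {}yx; apply/negP; rewrite -leNgt; lra.
Qed.

Theorem proposition9 (m n s : nat) (eps : rat)
  (heps0 : (0 < eps)%R) (hepsm : (eps * (m.+1)%:R < 1)%R) (hepsn : (eps * n%:R < 1)%R)
  (u : 'I_n -> 'I_m.+1 -> nat) (hinj : forall i, injective (u i))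
  (aP : 'I_s -> 'I_m.+1) :
  let a := truthful u in
  let j := winner a aP in
  is_PNE eps u aP a <->
  ~ ( ((1 < #|Wset a aP|)%N /\
        exists k, k \in Wset a aP /\
          exists i : 'I_n, top u i != k /\ (u i j < u i k)%N)
    \/ (Hset a aP != set0 /\
        exists k, k \in Hset a aP /\
          exists i : 'I_n, [/\ top u i != k, (u i j < u i k)%N & (k < j)%N]) ).
Proof.
move=> a j.
have eps01 : (0 < eps < 1)%R.
  have : (1 <= (m.+1)%:R :> rat)%R by rewrite ler1n.
  by rewrite heps0 /=; nra.
split.
- move=> PNE [[_ [k [kW [i [ik better]]]]] | [_ [k [kH [i [ik better kj]]]]]];
    apply: (PNE i (Some k)); rewrite truthful_deviation_better //.
  + rewrite (@winner_deviate_tied _ _ _ a aP i (top u i) k) //.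
    by apply/eqP; rewrite -in_Wset.
  + rewrite (@winner_deviate_runnerup _ _ _ a aP i (top u i) k) //.
    by apply/eqP; rewrite -in_Hset.
- move=> no_cond i [c|]; last exact: truthful_abstention_worse.
  rewrite truthful_deviation_better // -/a -/j => better.
  have ij : top u i != j.
    by apply: contraTneq better => <-; rewrite -leqNgt top_max.
  have [|[wc ic [tied|[behind cj]]]] :=
    @winner_deviate_cases _ _ _ a aP i (top u i) c erefl ij.
  + by rewrite -/j => jj; rewrite jj ltnn in better.
  + apply: no_cond; left; rewrite wc in better; split.
      apply/card_gt1P; exists c, j; rewrite !in_Wset tied eqxx.
      by split=> //; apply: contraTneq better => ->; rewrite ltnn.
    by exists c; split; [rewrite in_Wset tied | exists i].
  + apply: no_cond; right; rewrite wc in better.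
    have cH : c \in Hset a aP by rewrite in_Hset behind.
    by split; [apply/set0Pn; exists c | exists c; split => //; exists i].
Qed.
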